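(* Assume $0<c<1$ and let $b=\tfrac12-c$. For each $\delta>0$ there is an irreducible aperiodic Markov subsystem $T:\bigcup_{j=1}^mJ_j\to\mathbb T$ whose maximal invariant set contains $K_\delta:=\{x\in\mathbb T:d(T^nx,b)\ge\delta\ \forall n\ge0\}$ and does not contain $b$.
   Context: $\mathbb T=\mathbb R/\mathbb Z$, $Tx=2x\bmod1$, $d$ the usual distance on $\mathbb T$. A Markov subsystem $T:\bigcup_{j=1}^mJ_j\to\mathbb T$ is given by closed subintervals $J_1,\dots,J_m$ of $\mathbb T\setminus\{b\}$ with pairwise disjoint interiors such that $T|_{J_j}$ is a homeomorphism onto the subinterval $T(J_j)$ for each $j$, and for each $j,k$ either $T(J_j^o)\cap J_k^o=\emptyset$ or $T(J_j)\supset J_k$. Its maximal invariant set is $\bigcap_{n\ge1}T^{-n}(J_1\cup\dots\cup J_m)$ (intersected with $\bigcup_jJ_j$). It is irreducible if for all $j,k$ there are $j_0=j,j_1,\dots,j_s=k$ with $T(J_{j_i})\supset J_{j_{i+1}}$ for $0\le i<s$, and an irreducible one is aperiodic if there is $N\ge1$ such that for all $j,k$ there are $j_0=j,\dots,j_N=k$ with $T(J_{j_i})\supset J_{j_{i+1}}$ for $0\le i<N$. *)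

(* the circle T = R/Z is modelled by 1-periodic notions on R. *)
From Stdlib Require Import Reals Lra Lia.
Open Scope R_scope.

Definition dbl (x : R) : R := frac_part (2 * x).

Fixpoint dbl_iter (n : nat) (x : R) : R :=
  match n with O => x | S n' => dbl (dbl_iter n' x) end.

Definition eqT (x y : R) : Prop := frac_part (x - y) = 0.

Definition distT (x y : R) : R :=
  Rmin (frac_part (x - y)) (1 - frac_part (x - y)).

(* a closed arc of T: the image in T of [a_start, a_start + a_len] *)
Record arc := mkArc { a_start : R; a_len : R }.

Definition in_arc (A : arc) (x : R) : Prop :=
  frac_part (x - a_start A) <= a_len A.

Definition in_arc_int (A : arc) (x : R) : Prop :=
  0 < frac_part (x - a_start A) < a_len A.

Definition covers (J : nat -> arc) (j k : nat) : Prop :=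
  forall y, in_arc (J k) y -> exists x, in_arc (J j) x /\ eqT (dbl x) y.

Definition markov_subsystem (b : R) (m : nat) (J : nat -> arc) : Prop :=
  (forall j, (j < m)%nat -> 0 < a_len (J j) < 1 /\ ~ in_arc (J j) b) /\
  (forall j k, (j < m)%nat -> (k < m)%nat -> j <> k ->
     forall x, ~ (in_arc_int (J j) x /\ in_arc_int (J k) x)) /\
  (* T restricted to J_j is injective (hence a homeomorphism onto the arc T(J_j)) *)
  (forall j, (j < m)%nat -> forall x y, in_arc (J j) x -> in_arc (J j) y ->
     eqT (dbl x) (dbl y) -> eqT x y) /\
  (forall j k, (j < m)%nat -> (k < m)%nat ->
     (~ exists x, in_arc_int (J j) x /\ in_arc_int (J k) (dbl x)) \/ covers J j k).

Definition in_union (m : nat) (J : nat -> arc) (x : R) : Prop :=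
  exists j, (j < m)%nat /\ in_arc (J j) x.

Definition max_invariant (m : nat) (J : nat -> arc) (x : R) : Prop :=
  forall n : nat, in_union m J (dbl_iter n x).

Definition trans_path (m : nat) (J : nat -> arc) (s j k : nat) : Prop :=
  exists p : nat -> nat, p O = j /\ p s = k /\
    (forall i, (i <= s)%nat -> (p i < m)%nat) /\
    (forall i, (i < s)%nat -> covers J (p i) (p (S i))).

Definition irreducible (m : nat) (J : nat -> arc) : Prop :=
  forall j k, (j < m)%nat -> (k < m)%nat -> exists s, trans_path m J s j k.

Definition aperiodic (m : nat) (J : nat -> arc) : Prop :=
  irreducible m J /\
  exists N, (1 <= N)%nat /\
    forall j k, (j < m)%nat -> (k < m)%nat -> trans_path m J N j k.

From Stdlib Require Import Reals Lra Lia ZArith Arith Bool Classical.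
Open Scope R_scope.

(* Cut the circle into the 2^q dyadic arcs [A/2^q, (A+1)/2^q], where 2^-q < delta. The doubling
   map sends each of them onto two adjacent ones, so every family of such arcs is a Markov
   subsystem, and following a point through the arcs amounts to reading its binary expansion through
   a sliding window of q digits. Keep every arc except the one or two that contain b: the discarded
   points lie within 2^-q < delta of b, so K_delta stays in the maximal invariant set while b leaves
   it. Irreducibility and aperiodicity then amount to joining any two allowed q-digit words by binary
   strings of one fixed length none of whose windows is a forbidden word:
   - if b = 0, the forbidden words 0^q and 1^q are avoided by an alternating filler;
   - if b is not dyadic, q is chosen so that the forbidden word (the first q digits of b) begins and
     ends with the same digit a, and a block of ¬a's separates any two words;
   - if b = (2M+1)/2^(al+1), the forbidden words are A 1 0^J and A 0 1^J; the route passes through a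
     filler without three equal consecutive digits and then through the hub a ¬a^(q-1).
   The hypothesis 0 < c < 1 excludes b = 1/2, where the forbidden words 01^(q-1) and 10^(q-1) would
   disconnect the graph. *)

(** * Arithmetic on the circle *)

Lemma frac_part_le_iff (r l : R) : 0 <= l < 1 ->
  frac_part r <= l <-> exists k : Z, IZR k <= r <= IZR k + l.
Proof.
  intros Hl; split.
  - intros H. exists (Int_part r). pose proof (Rplus_Int_part_frac_part r).
    pose proof (base_fp r). lra.
  - intros [k Hk].
    destruct (Int_part_frac_part_spec r k (r - IZR k)) as [_ <-]; lra.
Qed.

Lemma frac_part_interior_iff (r l : R) : 0 < l <= 1 ->
  0 < frac_part r < l <-> exists k : Z, IZR k < r < IZR k + l.
Proof.
  intros Hl; split.
  - intros H. exists (Int_part r). pose proof (Rplus_Int_part_frac_part r). lra.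
  - intros [k Hk].
    destruct (Int_part_frac_part_spec r k (r - IZR k)) as [_ <-]; lra.
Qed.

Lemma eqT_iff (x y : R) : eqT x y <-> exists k : Z, x - y = IZR k.
Proof.
  split; [apply fp_nat|].
  intros [k Hk]. unfold eqT. rewrite Hk.
  destruct (Int_part_frac_part_spec (IZR k) k 0) as [_ <-]; lra.
Qed.

Lemma eqT_dbl_iff (x y : R) : eqT (dbl x) y <-> exists k : Z, 2 * x - y = IZR k.
Proof.
  rewrite eqT_iff. unfold dbl, frac_part.
  split; intros [k Hk]; [exists (k + Int_part (2 * x))%Z | exists (k - Int_part (2 * x))%Z];
    rewrite ?plus_IZR, ?minus_IZR; lra.
Qed.

Lemma Z_eq_of_close (a c : Z) : IZR a < IZR c + 1 -> IZR c < IZR a + 1 -> a = c.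
Proof.
  rewrite <- !(plus_IZR _ 1). intros H1%lt_IZR H2%lt_IZR. lia.
Qed.

Lemma INR_pow2 (q : nat) : INR (2 ^ q) = 2 ^ q.
Proof. rewrite pow_INR. reflexivity. Qed.

Lemma pow2_inv_small (eps : R) : 0 < eps -> exists k0, forall k, (k0 <= k)%nat -> / 2 ^ k < eps.
Proof.
  intros He. destruct (pow_lt_1_zero (/ 2) ltac:(rewrite Rabs_pos_eq; lra) eps He) as [k0 Hk0].
  exists k0. intros k Hk. specialize (Hk0 k Hk).
  rewrite Rabs_pos_eq, pow_inv in Hk0 by (apply pow_le; lra). exact Hk0.
Qed.

Lemma eq_0_of_pow2_bounded (e : R) : (forall d, Rabs e * 2 ^ d <= 1) -> e = 0.
Proof.
  intros H. destruct (Req_dec e 0) as [E|Hne]; [exact E|exfalso].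
  pose proof (Rabs_pos_lt e Hne).
  destruct (pow2_inv_small (Rabs e) ltac:(lra)) as [k0 Hk0].
  specialize (Hk0 k0 (le_n _)). specialize (H (S k0)). pose proof (pow_lt 2 k0 ltac:(lra)).
  apply (Rmult_lt_compat_r (2 ^ k0)) in Hk0; [|lra]. rewrite Rinv_l in Hk0 by lra.
  simpl in H. nra.
Qed.

Lemma distT_le (w b : R) (k : Z) : distT w b <= Rabs (w - b - IZR k).
Proof.
  unfold distT. pose proof (Rplus_Int_part_frac_part (w - b)). pose proof (base_fp (w - b)).
  set (f := frac_part (w - b)) in *. set (I := Int_part (w - b)) in *.
  destruct (Z.lt_total k I) as [Hl|[->|Hg]].
  - assert (IZR k + 1 <= IZR I) by (rewrite <- plus_IZR; apply IZR_le; lia).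
    apply (Rle_trans _ f); [apply Rmin_l|]. rewrite Rabs_right; lra.
  - apply (Rle_trans _ f); [apply Rmin_l|]. rewrite Rabs_right; lra.
  - assert (IZR I + 1 <= IZR k) by (rewrite <- plus_IZR; apply IZR_le; lia).
    apply (Rle_trans _ (1 - f)); [apply Rmin_r|]. rewrite Rabs_left; lra.
Qed.

Lemma distT_le_scaled (w b : R) (q : nat) (s : Z) :
  Rabs (frac_part w * 2 ^ q - frac_part b * 2 ^ q - 2 ^ q * IZR s) <= 1 -> distT w b <= / 2 ^ q.
Proof.
  intros H. pose proof (pow_lt 2 q ltac:(lra)).
  apply (Rle_trans _ _ _ (distT_le w b (Int_part w - Int_part b + s))).
  replace (w - b - IZR (Int_part w - Int_part b + s)) with (frac_part w - frac_part b - IZR s)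
    by (rewrite plus_IZR, minus_IZR; pose proof (Rplus_Int_part_frac_part w);
        pose proof (Rplus_Int_part_frac_part b); lra).
  apply (Rmult_le_reg_l (2 ^ q)); [lra|]. rewrite Rinv_r by lra.
  rewrite <- (Rabs_pos_eq (2 ^ q)) at 1 by lra. rewrite <- Rabs_mult.
  replace (2 ^ q * (frac_part w - frac_part b - IZR s)) with
    (frac_part w * 2 ^ q - frac_part b * 2 ^ q - 2 ^ q * IZR s) by ring.
  exact H.
Qed.

(** * Arcs of a uniform grid and the doubling map *)

Section GridArcs.
Variable n : nat.
Hypothesis Hn : (3 <= n)%nat.

Definition grid_arc (A : Z) : arc := mkArc (IZR A / INR n) (/ INR n).

Let N := INR n.

Let N_ge3 : 3 <= N.
Proof. unfold N. replace 3 with (INR 3) by (simpl; lra). apply le_INR; lia. Qed.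

Lemma grid_len : 0 < / N < 1.
Proof.
  pose proof N_ge3. split; [apply Rinv_0_lt_compat; lra|].
  rewrite <- Rinv_1. apply Rinv_lt_contravar; lra.
Qed.

Lemma in_grid_arc_iff (A : Z) (x : R) : in_arc (grid_arc A) x <->
  exists k : Z, IZR A + N * IZR k <= N * x <= IZR A + 1 + N * IZR k.
Proof.
  pose proof N_ge3. pose proof grid_len.
  assert (Ni : N * / N = 1) by (field; lra).
  unfold in_arc, grid_arc; simpl. fold N. rewrite frac_part_le_iff by lra.
  set (a := IZR A / N). assert (Ha : IZR A = N * a) by (unfold a; field; lra).
  rewrite Ha. set (i := / N) in *.
  split; intros [k Hk]; exists k; split; nra.
Qed.

Lemma in_grid_arc_int_iff (A : Z) (x : R) : in_arc_int (grid_arc A) x <->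
  exists k : Z, IZR A + N * IZR k < N * x < IZR A + 1 + N * IZR k.
Proof.
  pose proof N_ge3. pose proof grid_len.
  assert (Ni : N * / N = 1) by (field; lra).
  unfold in_arc_int, grid_arc; simpl. fold N. rewrite frac_part_interior_iff by lra.
  set (a := IZR A / N). assert (Ha : IZR A = N * a) by (unfold a; field; lra).
  rewrite Ha. set (i := / N) in *.
  split; intros [k Hk]; exists k; split; nra.
Qed.

Let nz := Z.of_nat n.
Let N_IZR : N = IZR nz := INR_IZR_INZ n.

Lemma grid_arc_int_same (A B : Z) (x : R) :
  in_arc_int (grid_arc A) x -> in_arc_int (grid_arc B) x -> exists M : Z, B = (A + nz * M)%Z.
Proof.
  rewrite !in_grid_arc_int_iff, N_IZR. intros [k Hk] [k' Hk'].
  assert (E : (A + nz * k)%Z = (B + nz * k')%Z)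
    by (apply Z_eq_of_close; rewrite !plus_IZR, !mult_IZR; lra).
  exists (k - k')%Z. lia.
Qed.

Lemma grid_arc_int_dbl (A B : Z) (x : R) :
  in_arc_int (grid_arc A) x -> in_arc_int (grid_arc B) (dbl x) ->
  exists (e M : Z), (e = 0 \/ e = 1)%Z /\ B = (2 * A + e + nz * M)%Z.
Proof.
  rewrite !in_grid_arc_int_iff, N_IZR. intros [k Hk] [k' Hk'].
  unfold dbl, frac_part in Hk'. set (I := Int_part (2 * x)) in Hk'.
  set (c := (B + nz * (k' + I))%Z). set (a := (2 * A + 2 * nz * k)%Z).
  assert (Hc : IZR c < 2 * IZR nz * x < IZR c + 1)
    by (unfold c; rewrite plus_IZR, mult_IZR, plus_IZR; lra).
  assert (Ha : IZR a < 2 * IZR nz * x < IZR a + 2)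
    by (unfold a; rewrite plus_IZR, !mult_IZR; lra).
  assert (H1 : (c < a + 2)%Z) by (apply lt_IZR; rewrite plus_IZR; lra).
  assert (H2 : (a < c + 1)%Z) by (apply lt_IZR; rewrite plus_IZR; lra).
  exists (c - a)%Z, (2 * k - k' - I)%Z. split; [lia|]. unfold a, c in *. lia.
Qed.

Lemma grid_arc_dbl_onto (A B e M : Z) : (e = 0 \/ e = 1)%Z -> B = (2 * A + e + nz * M)%Z ->
  forall y, in_arc (grid_arc B) y -> exists x, in_arc (grid_arc A) x /\ eqT (dbl x) y.
Proof.
  intros He HB y. rewrite in_grid_arc_iff, N_IZR. intros [k Hk].
  exists ((y - IZR (k + M)) / 2). split.
  - rewrite in_grid_arc_iff, N_IZR. exists 0%Z.
    assert (0 <= IZR e <= 1) by (destruct He; subst; simpl; lra).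
    rewrite HB, !plus_IZR, !mult_IZR in Hk. rewrite plus_IZR. split; nra.
  - apply eqT_dbl_iff. exists (- (k + M))%Z. rewrite opp_IZR. lra.
Qed.

Lemma grid_arc_dbl_inj (A : Z) (x y : R) : in_arc (grid_arc A) x -> in_arc (grid_arc A) y ->
  eqT (dbl x) (dbl y) -> eqT x y.
Proof.
  pose proof N_ge3 as HN. rewrite !in_grid_arc_iff, !eqT_iff.
  intros [k Hk] [k' Hk'] [z Hz]. unfold dbl, frac_part in Hz.
  set (d := (z + Int_part (2 * x) - Int_part (2 * y) - 2 * (k - k'))%Z).
  assert (Ed : IZR d = 2 * x - 2 * y - 2 * (IZR k - IZR k'))
    by (unfold d; rewrite !minus_IZR, !plus_IZR, mult_IZR, minus_IZR; simpl; lra).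
  assert (Hd : N * IZR d = 2 * (N * x - N * y) - 2 * N * (IZR k - IZR k'))
    by (rewrite Ed; ring).
  assert (Hd0 : d = 0%Z) by (apply Z_eq_of_close; simpl; nra).
  exists (k - k')%Z. rewrite minus_IZR. rewrite Hd0 in Ed. simpl in Ed. lra.
Qed.
End GridArcs.

(** * Binary words *)

Section BinaryWords.
Local Open Scope nat_scope.

(* [window q s i] is the number with binary digits s i, ..., s (i + q - 1), most significant first;
   when s is the binary expansion of w, it is the address of the arc containing T^i w. *)
Fixpoint window (q : nat) (s : nat -> bool) (i : nat) : nat :=
  match q with
  | O => O
  | S q' => 2 * window q' s i + Nat.b2n (s (i + q'))
  end.

Lemma window_lt q s i : window q s i < 2 ^ q.
Proof.
  induction q as [|q IH]; simpl; [lia|]. pose proof (Nat.b2n_le_1 (s (i + q))). lia.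
Qed.

Lemma window_ext q s s' i i' : (forall k, k < q -> s (i + k) = s' (i' + k)) ->
  window q s i = window q s' i'.
Proof.
  induction q as [|q IH]; intros H; simpl; [reflexivity|].
  rewrite IH by (intros; apply H; lia). rewrite H by lia. reflexivity.
Qed.

Lemma window_inj q s s' i i' : window q s i = window q s' i' ->
  forall k, k < q -> s (i + k) = s' (i' + k).
Proof.
  induction q as [|q IH]; intros H k Hk; simpl in H; [lia|].
  pose proof (Nat.b2n_le_1 (s (i + q))). pose proof (Nat.b2n_le_1 (s' (i' + q))).
  destruct (Nat.eq_dec k q) as [->|Hkq].
  - apply Nat.b2n_inj. lia.
  - apply IH; [lia|lia].
Qed.

Lemma window_app q1 q2 s i :
  window (q1 + q2) s i = window q1 s i * 2 ^ q2 + window q2 s (i + q1).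
Proof.
  induction q2 as [|q2 IH]; [rewrite Nat.add_0_r; simpl; lia|].
  rewrite Nat.add_succ_r. simpl. rewrite IH, (Nat.add_assoc i q1 q2). ring.
Qed.

Lemma window_succ q s i :
  window q s (S i) + 2 ^ q * Nat.b2n (s i) = 2 * window q s i + Nat.b2n (s (i + q)).
Proof.
  pose proof (window_app 1 q s i) as H. change (1 + q) with (S q) in H.
  cbn [window] in H. rewrite Nat.add_0_r, Nat.add_1_r in H. lia.
Qed.

Lemma window_const q (c : bool) s i : (forall k, k < q -> s (i + k) = c) ->
  window q s i = if c then 2 ^ q - 1 else 0.
Proof.
  induction q as [|q IH]; intros H; simpl; [destruct c; reflexivity|].
  rewrite IH by (intros; apply H; lia). rewrite H by lia.
  pose proof (Nat.pow_nonzero 2 q). destruct c; simpl; lia.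
Qed.

Definition bits (q x : nat) (k : nat) : bool := Nat.testbit x (q - 1 - k).

Lemma window_bits_prefix q x k : x < 2 ^ q -> k <= q ->
  window k (bits q x) 0 = x / 2 ^ (q - k).
Proof.
  intros Hx. induction k as [|k IH]; intros Hk; simpl.
  - rewrite Nat.sub_0_r, Nat.div_small; auto.
  - rewrite IH by lia. unfold bits. simpl.
    replace (q - k) with (S (q - 1 - k)) by lia. replace (q - S k) with (q - 1 - k) by lia.
    rewrite Nat.pow_succ_r', Nat.mul_comm, <- Nat.Div0.div_div, Nat.testbit_spec'.
    pose proof (Nat.div_mod (x / 2 ^ (q - 1 - k)) 2). lia.
Qed.

Lemma window_bits q x : x < 2 ^ q -> window q (bits q x) 0 = x.
Proof.
  intros Hx. rewrite window_bits_prefix, Nat.sub_diag by lia. apply Nat.div_1_r.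
Qed.

Definition cat_bits (q : nat) (f g : nat -> bool) (k : nat) : bool :=
  if k <? q then f k else g (k - q).

Lemma cat_bits_l q f g k : k < q -> cat_bits q f g k = f k.
Proof. intros; unfold cat_bits. destruct (Nat.ltb_spec k q); [reflexivity|lia]. Qed.

Lemma cat_bits_r q f g k : q <= k -> cat_bits q f g k = g (k - q).
Proof. intros; unfold cat_bits. destruct (Nat.ltb_spec k q); [lia|reflexivity]. Qed.

Lemma window_cat_bits_ends q L u v F : u < 2 ^ q -> v < 2 ^ q ->
  window q (cat_bits q (bits q u) (cat_bits L F (bits q v))) 0 = u /\
  window q (cat_bits q (bits q u) (cat_bits L F (bits q v))) (q + L) = v.
Proof.
  intros Hu Hv. split.
  - rewrite <- (window_bits q u) at 2 by exact Hu. apply window_ext. intros k Hk.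
    rewrite cat_bits_l by lia. reflexivity.
  - rewrite <- (window_bits q v) at 2 by exact Hv. apply window_ext. intros k Hk.
    rewrite !cat_bits_r by lia. f_equal. lia.
Qed.

Definition differs (q : nat) (s : nat -> bool) (i : nat) (r : nat -> bool) : Prop :=
  exists k, k < q /\ s (i + k) <> r k.

Lemma window_neq_of_differs q s i r : differs q s i r -> window q s i <> window q r 0.
Proof. intros [k [Hk Hd]] H. exact (Hd (window_inj q s r i 0 H k Hk)). Qed.

Lemma differs_of_split q s i r k1 k2 : k1 < q -> k2 < q ->
  r k1 = r k2 -> s (i + k1) <> s (i + k2) -> differs q s i r.
Proof.
  intros H1 H2 Hr HS. destruct (bool_dec (s (i + k1)) (r k1)) as [E|E].
  - exists k2. split; [exact H2|]. rewrite <- Hr, <- E. auto.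
  - exists k1. auto.
Qed.

Lemma differs_of_merge q s i r k1 k2 : k1 < q -> k2 < q ->
  r k1 <> r k2 -> s (i + k1) = s (i + k2) -> differs q s i r.
Proof.
  intros H1 H2 Hr HS. destruct (bool_dec (s (i + k1)) (r k1)) as [E|E].
  - exists k2. split; [exact H2|]. rewrite <- HS, E. exact Hr.
  - exists k1. auto.
Qed.
End BinaryWords.

(** * Joining words while avoiding forbidden ones *)

Ltac simpl_cat := repeat first [rewrite cat_bits_l by lia | rewrite cat_bits_r by lia].

Section Connectivity.
Local Open Scope nat_scope.

Lemma connect_avoiding_word (q : nat) (a : bool) (r : nat -> bool) :
  1 <= q -> r 0 = a -> r (q - 1) = a ->
  forall u v, u < 2 ^ q -> v < 2 ^ q ->
  exists s, window q s 0 = u /\ window q s (q + q) = v /\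
    forall i, 0 < i < q + q -> differs q s i r.
Proof.
  intros Hq R0 R1 u v Hu Hv.
  set (s := cat_bits q (bits q u) (cat_bits q (fun _ => negb a) (bits q v))).
  destruct (window_cat_bits_ends q q u v (fun _ => negb a) Hu Hv) as [E0 EN].
  exists s. split; [exact E0|]. split; [exact EN|]. intros i Hi. unfold s.
  destruct (Nat.le_gt_cases i q).
  - exists (q - 1). split; [lia|]. simpl_cat. rewrite R1. destruct a; discriminate.
  - exists 0. split; [lia|]. simpl_cat. rewrite R0. destruct a; discriminate.
Qed.

Definition zigzag (d g : bool) (P k : nat) : bool :=
  if k <? P then xorb d (Nat.odd k) else xorb g (Nat.odd (k - P)).

Definition no_run3 (D : nat -> bool) : Prop :=
  forall k, D k <> D (S k) \/ D (S k) <> D (S (S k)).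

Section Zigzag.
Variables (d g : bool) (P : nat).
Hypothesis HP : 2 <= P.

Lemma zigzag_0 : zigzag d g P 0 = d.
Proof. unfold zigzag. destruct (Nat.ltb_spec 0 P); [|lia]. destruct d; reflexivity. Qed.

Lemma zigzag_1 : zigzag d g P 1 = negb d.
Proof. unfold zigzag. destruct (Nat.ltb_spec 1 P); [|lia]. destruct d; reflexivity. Qed.

Lemma zigzag_P : zigzag d g P P = g.
Proof.
  unfold zigzag. destruct (Nat.ltb_spec P P); [lia|]. rewrite Nat.sub_diag. destruct g; reflexivity.
Qed.

Lemma zigzag_step k : S k <> P -> zigzag d g P k <> zigzag d g P (S k).
Proof.
  intros Hk. unfold zigzag.
  destruct (Nat.ltb_spec k P), (Nat.ltb_spec (S k) P); try lia.
  - rewrite Nat.odd_succ, <- Nat.negb_odd. destruct d, (Nat.odd k); discriminate.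
  - replace (S k - P) with (S (k - P)) by lia.
    rewrite Nat.odd_succ, <- Nat.negb_odd. destruct g, (Nat.odd (k - P)); discriminate.
Qed.

Lemma zigzag_no_run3 : no_run3 (zigzag d g P).
Proof.
  intros k. destruct (Nat.eq_dec (S k) P) as [E|E].
  - right. apply zigzag_step. lia.
  - left. apply zigzag_step. exact E.
Qed.
End Zigzag.

Lemma differs_of_run3 (q : nat) (s D : nat -> bool) (i : nat) (r : nat -> bool) (p j : nat) :
  no_run3 D -> S (S p) < q -> r p = r (S p) -> r (S p) = r (S (S p)) ->
  s (i + p) = D j -> s (i + S p) = D (S j) -> s (i + S (S p)) = D (S (S j)) ->
  differs q s i r.
Proof.
  intros HD Hp R1 R2 E0 E1 E2. destruct (HD j) as [H|H].
  - apply (differs_of_split _ _ _ _ p (S p)); [lia|lia|exact R1|]. rewrite E0, E1. exact H.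
  - apply (differs_of_split _ _ _ _ (S p) (S (S p))); [lia|lia|exact R2|]. rewrite E1, E2. exact H.
Qed.

Lemma connect_avoiding_constants (q : nat) : 3 <= q ->
  forall u v, u < 2 ^ q -> v < 2 ^ q ->
  exists s, window q s 0 = u /\ window q s (q + q) = v /\
    forall i, 0 < i < q + q -> forall c : bool, differs q s i (fun _ => c).
Proof.
  intros Hq u v Hu Hv.
  set (D := zigzag (negb (bits q u (q - 1))) (negb (bits q v 0)) (q - 1)).
  set (s := cat_bits q (bits q u) (cat_bits q D (bits q v))).
  destruct (window_cat_bits_ends q q u v D Hu Hv) as [E0 EN].
  exists s. split; [exact E0|]. split; [exact EN|]. intros i Hi c. unfold s.
  destruct (lt_eq_lt_dec i q) as [[Hlt| ->]|Hgt].
  - apply (differs_of_split _ _ _ _ (q - 1 - i) (q - i)); [lia|lia|reflexivity|].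
    simpl_cat. replace (i + (q - 1 - i)) with (q - 1) by lia.
    replace (i + (q - i) - q) with 0 by lia. unfold D. rewrite zigzag_0 by lia.
    destruct (bits q u (q - 1)); discriminate.
  - apply (differs_of_split _ _ _ _ 0 1); [lia|lia|reflexivity|].
    simpl_cat. rewrite Nat.add_0_r, Nat.sub_diag. replace (q + 1 - q) with 1 by lia.
    unfold D. rewrite zigzag_0, zigzag_1 by lia. destruct (bits q u (q - 1)); discriminate.
  - apply (differs_of_split _ _ _ _ (q + q - 1 - i) (q + q - i)); [lia|lia|reflexivity|].
    simpl_cat. replace (i + (q + q - 1 - i) - q) with (q - 1) by lia.
    replace (i + (q + q - i) - q - q) with 0 by lia. unfold D. rewrite zigzag_P by lia.
    destruct (bits q v 0); discriminate.
Qed.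
End Connectivity.

(* The addresses A c ¬c ... ¬c of the two arcs that meet at b = (2M+1)/2^(al+1), A spelling M. *)
Section DyadicWord.
Local Open Scope nat_scope.
Variables (al : nat) (A : nat -> bool).

Definition dyadic_word (c : bool) (k : nat) : bool :=
  if k <? al then A k else if k =? al then c else negb c.

Lemma dyadic_word_head c k : k < al -> dyadic_word c k = A k.
Proof. intros; unfold dyadic_word. destruct (Nat.ltb_spec k al); [reflexivity|lia]. Qed.

Lemma dyadic_word_mid c : dyadic_word c al = c.
Proof.
  unfold dyadic_word. destruct (Nat.ltb_spec al al); [lia|]. rewrite Nat.eqb_refl. reflexivity.
Qed.

Lemma dyadic_word_tail c k : al < k -> dyadic_word c k = negb c.
Proof.
  intros; unfold dyadic_word.
  destruct (Nat.ltb_spec k al); [lia|]. destruct (Nat.eqb_spec k al); [lia|reflexivity].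
Qed.
End DyadicWord.

Section DyadicPair.
Local Open Scope nat_scope.
Variables (al J : nat) (A : nat -> bool).
Hypothesis Hal : 1 <= al.
Hypothesis HJ : 4 <= J.

Let q := al + 1 + J.
Let L := q + q.
Let a := A 0.

(* Every window starting inside the hub a ¬a ... ¬a after its first digit begins with ¬a, whereas
   both forbidden words begin with a. *)
Definition hub_word (k : nat) : bool := if k =? 0 then a else negb a.

Lemma hub_word_pos k : 0 < k -> hub_word k = negb a.
Proof. intros Hk. unfold hub_word. destruct (Nat.eqb_spec k 0); [lia|reflexivity]. Qed.

Section DyadicPath.
Variables (u v : nat) (d : bool) (D : nat -> bool).
(* The window at position 1 ends with D 0 = d, chosen so that it cannot complete the only
   forbidden word that u_1 ... u_(q-1) may begin. *)
Hypothesis Hd : if d then (forall k, k < q - 1 -> bits q u (S k) = dyadic_word al A true k)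
                else ~ (forall k, k < q - 1 -> bits q u (S k) = dyadic_word al A true k).
Hypothesis HD0 : D 0 = d.
Hypothesis HD1 : D 1 = negb d.
(* Breaks the window that starts at filler position L - al and meets the hub's first digit a at
   its position al. *)
Hypothesis HDP : D (L - al) = negb a.
Hypothesis HD3 : no_run3 D.

Definition dyadic_path : nat -> bool :=
  cat_bits q (bits q u) (cat_bits (L + q) (cat_bits L D hub_word) (bits q v)).

Lemma dyadic_path_filler_at k : q <= k < q + L -> dyadic_path k = D (k - q).
Proof. intros Hk. unfold dyadic_path. simpl_cat. reflexivity. Qed.

Lemma dyadic_path_hub_at k : q + L <= k < q + L + q -> dyadic_path k = hub_word (k - q - L).
Proof. intros Hk. unfold dyadic_path. simpl_cat. reflexivity. Qed.


Lemma dyadic_path_start (c : bool) (i : nat) : 0 < i <= 2 ->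
  differs q dyadic_path i (dyadic_word al A c).
Proof.
  intros Hi. unfold dyadic_path.
  destruct (Nat.eq_dec i 2) as [->|Hi2].
  { apply (differs_of_split _ _ _ _ (q - 2) (q - 1)); [lia|lia| |].
    - rewrite !dyadic_word_tail by lia. reflexivity.
    - simpl_cat. replace (2 + (q - 2) - q) with 0 by lia. replace (2 + (q - 1) - q) with 1 by lia.
      rewrite HD0, HD1. destruct d; discriminate. }
  replace i with 1 by lia.
  assert (Hlast : D 0 <> dyadic_word al A c (q - 1) ->
                  differs q dyadic_path 1 (dyadic_word al A c)).
  { intros H. exists (q - 1). split; [lia|]. unfold dyadic_path. simpl_cat.
    replace (1 + (q - 1) - q) with 0 by lia. exact H. }
  rewrite HD0, dyadic_word_tail in Hlast by lia.
  destruct d, c.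
  - apply Hlast. discriminate.
  - exists al. split; [lia|]. simpl_cat. rewrite Hd by lia. rewrite !dyadic_word_mid. discriminate.
  - apply not_all_ex_not in Hd as [k Hk]. apply imply_to_and in Hk as [Hk1 Hk2].
    exists k. split; [lia|]. simpl_cat. exact Hk2.
  - apply Hlast. discriminate.
Qed.

Lemma dyadic_path_filler (c : bool) (i : nat) : 3 <= i <= L + 1 ->
  differs q dyadic_path i (dyadic_word al A c).
Proof.
  intros Hi. set (p := if i <=? L then q - 3 else q - 4).
  assert (Hp : p + 3 <= q /\ al < p /\ q <= i + p /\ i + p + 2 < q + L)
    by (unfold p; destruct (Nat.leb_spec i L); lia).
  apply (differs_of_run3 q _ D i _ p (i + p - q) HD3); [lia| | | | |].
  1,2: rewrite !dyadic_word_tail by lia; reflexivity.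
  all: rewrite dyadic_path_filler_at by lia; f_equal; lia.
Qed.

Lemma dyadic_path_hub (c : bool) (i : nat) : L + 2 <= i < L + q + q ->
  differs q dyadic_path i (dyadic_word al A c).
Proof.
  intros Hi.
  assert (Hr0 : dyadic_word al A c 0 = a) by (apply dyadic_word_head; lia).
  destruct (le_lt_dec i (L + J)) as [H1|H1]; [|destruct (Nat.eq_dec i (L + J + 1)) as [->|H2]].
  - apply (differs_of_split _ _ _ _ (q + L - i) (q - 1)); [lia|lia| |].
    + rewrite !dyadic_word_tail by lia. reflexivity.
    + rewrite !dyadic_path_hub_at by lia. replace (i + (q + L - i) - q - L) with 0 by lia.
      rewrite (hub_word_pos (i + (q - 1) - q - L)) by lia. apply not_eq_sym, no_fixpoint_negb.
  - destruct (bool_dec c a) as [->|Hc].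
    + exists 0. split; [lia|]. rewrite Hr0, dyadic_path_filler_at by lia.
      replace (L + J + 1 + 0 - q) with (L - al) by lia. rewrite HDP. apply no_fixpoint_negb.
    + exists al. split; [lia|]. rewrite dyadic_word_mid, dyadic_path_hub_at by lia.
      replace (L + J + 1 + al - q - L) with 0 by lia. intros E. apply Hc. exact (eq_sym E).
  - destruct (le_lt_dec i (L + q)) as [H3|H3].
    + apply (differs_of_merge _ _ _ _ al (S al)); [lia|lia| |].
      * rewrite dyadic_word_mid, dyadic_word_tail by lia. destruct c; discriminate.
      * rewrite !dyadic_path_hub_at, !hub_word_pos by lia. reflexivity.
    + exists 0. split; [lia|]. rewrite Hr0, dyadic_path_hub_at, hub_word_pos by lia.
      apply no_fixpoint_negb.
Qed.
End DyadicPath.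

Lemma connect_avoiding_dyadic_pair : forall u v, u < 2 ^ q -> v < 2 ^ q ->
  exists s, window q s 0 = u /\ window q s (q + (L + q)) = v /\
    forall i, 0 < i < q + (L + q) -> forall c, differs q s i (dyadic_word al A c).
Proof.
  intros u v Hu Hv.
  set (P := forall k, k < q - 1 -> bits q u (S k) = dyadic_word al A true k).
  assert (Hd : exists d : bool, if d then P else ~ P)
    by (destruct (classic P); [exists true|exists false]; assumption).
  destruct Hd as [d Hd].
  set (D := zigzag d (negb a) (L - al)).
  assert (HD0 : D 0 = d) by (apply zigzag_0; lia).
  assert (HD1 : D 1 = negb d) by (apply zigzag_1; lia).
  assert (HDP : D (L - al) = negb a) by (apply zigzag_P; lia).
  assert (HD3 : no_run3 D) by (apply zigzag_no_run3; lia).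
  destruct (window_cat_bits_ends q (L + q) u v (cat_bits L D hub_word) Hu Hv) as [E0 EN].
  exists (dyadic_path u v D). split; [exact E0|]. split; [exact EN|].
  intros i Hi c. destruct (le_lt_dec i 2); [|destruct (le_lt_dec i (L + 1))].
  - apply (dyadic_path_start u v d); auto; lia.
  - apply dyadic_path_filler; auto; lia.
  - apply dyadic_path_hub; auto; lia.
Qed.
End DyadicPair.

Lemma window_dyadic_word (al J M : nat) (c : bool) : (M < 2 ^ al)%nat ->
  window (al + 1 + J) (dyadic_word al (bits al M) c) 0 =
    (if c then (2 * M + 1) * 2 ^ J else (2 * M + 1) * 2 ^ J - 1)%nat.
Proof.
  intros HM. rewrite !window_app.
  assert (E1 : window al (dyadic_word al (bits al M) c) 0 = M).
  { rewrite <- (window_bits al M HM) at 2. apply window_ext. intros k Hk.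
    apply dyadic_word_head. exact Hk. }
  assert (E2 : window 1 (dyadic_word al (bits al M) c) (0 + al) = Nat.b2n c)
    by (simpl; rewrite Nat.add_0_r, dyadic_word_mid; reflexivity).
  assert (E3 : window J (dyadic_word al (bits al M) c) (0 + (al + 1)) =
                (if negb c then 2 ^ J - 1 else 0)%nat)
    by (apply window_const; intros k Hk; apply dyadic_word_tail; lia).
  rewrite E1, E2, E3. pose proof (Nat.pow_nonzero 2 J). destruct c; simpl; nia.
Qed.

(** * Binary digits *)

Definition dyadic (beta : R) : Prop := exists (e : nat) (X : Z), beta * 2 ^ e = IZR X.

Definition dyadic_floor (beta : R) (k : nat) : Z := Int_part (beta * 2 ^ k).

(* [bin_digit beta k] is the (k+1)-st binary digit of beta after the point. *)
Definition bin_digit (beta : R) (k : nat) : bool := Z.odd (dyadic_floor beta (S k)).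

Section BinaryDigits.
Variable beta : R.
Hypothesis Hb : 0 <= beta < 1.

Lemma dyadic_floor_spec k :
  IZR (dyadic_floor beta k) <= beta * 2 ^ k < IZR (dyadic_floor beta k) + 1.
Proof. unfold dyadic_floor. destruct (base_Int_part (beta * 2 ^ k)). lra. Qed.

Lemma dyadic_floor_0 : dyadic_floor beta 0 = 0%Z.
Proof. unfold dyadic_floor. symmetry. apply Int_part_spec. simpl. lra. Qed.

Lemma dyadic_floor_succ k :
  dyadic_floor beta (S k) = (2 * dyadic_floor beta k + Z.b2z (bin_digit beta k))%Z.
Proof.
  pose proof (dyadic_floor_spec k) as Hk. pose proof (dyadic_floor_spec (S k)) as HSk.
  simpl pow in HSk. set (f := dyadic_floor beta k) in *.
  assert (E : dyadic_floor beta (S k) = (2 * f)%Z \/ dyadic_floor beta (S k) = (2 * f + 1)%Z).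
  { assert (IZR (2 * f - 1) < IZR (dyadic_floor beta (S k)) < IZR (2 * f + 2)) as [H1 H2]
      by (rewrite minus_IZR, plus_IZR, mult_IZR; lra).
    apply lt_IZR in H1. apply lt_IZR in H2. lia. }
  unfold bin_digit. destruct E as [E|E]; rewrite E.
  - rewrite Z.odd_even. cbn [Z.b2z]. lia.
  - rewrite Z.odd_odd. reflexivity.
Qed.

Lemma dyadic_floor_nonneg k : (0 <= dyadic_floor beta k)%Z.
Proof.
  induction k as [|k IH]; [rewrite dyadic_floor_0; lia|].
  rewrite dyadic_floor_succ. destruct (bin_digit beta k); cbn [Z.b2z]; lia.
Qed.

Lemma window_bin_digit k : window k (bin_digit beta) 0 = Z.to_nat (dyadic_floor beta k).
Proof.
  induction k as [|k IH]; [rewrite dyadic_floor_0; reflexivity|].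
  simpl window. rewrite IH, dyadic_floor_succ. pose proof (dyadic_floor_nonneg k).
  destruct (bin_digit beta k); cbn [Z.b2z Nat.b2n]; lia.
Qed.

Lemma dyadic_of_const_digits (Q : nat) (c : bool) :
  (forall k, (Q <= k)%nat -> bin_digit beta k = c) -> dyadic beta.
Proof.
  intros Hc. set (C := Z.b2z c).
  assert (G : forall d,
    (dyadic_floor beta (Q + d) + C = 2 ^ Z.of_nat d * (dyadic_floor beta Q + C))%Z).
  { induction d as [|d IH]; [rewrite Nat.add_0_r; lia|].
    rewrite Nat.add_succ_r, dyadic_floor_succ, Hc, Nat2Z.inj_succ, Z.pow_succ_r by lia.
    fold C. lia. }
  exists Q, (dyadic_floor beta Q + C)%Z.
  set (e := beta * 2 ^ Q - IZR (dyadic_floor beta Q + C)).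
  enough (e = 0) by (unfold e in *; lra).
  apply eq_0_of_pow2_bounded. intros d.
  pose proof (dyadic_floor_spec (Q + d)) as F. pose proof (pow_lt 2 d ltac:(lra)).
  assert (EG := f_equal IZR (G d)).
  rewrite plus_IZR, mult_IZR, <- pow_IZR, plus_IZR in EG.
  assert (HC : 0 <= IZR C <= 1) by (unfold C; destruct c; simpl; lra).
  rewrite pow_add in F. simpl (IZR 2) in EG.
  replace (Rabs e * 2 ^ d) with (Rabs (e * 2 ^ d))
    by (rewrite Rabs_mult, (Rabs_pos_eq (2 ^ d)); lra).
  apply Rabs_le. unfold e. rewrite plus_IZR. split; nra.
Qed.

Lemma bin_digit_recurs : ~ dyadic beta ->
  forall Q, exists k, (Q <= k)%nat /\ bin_digit beta k = bin_digit beta 0.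
Proof.
  intros Hnd Q. apply NNPP. intros Hn. apply Hnd.
  apply (dyadic_of_const_digits Q (negb (bin_digit beta 0))). intros k Hk.
  destruct (bool_dec (bin_digit beta k) (bin_digit beta 0)) as [E|E].
  - exfalso. apply Hn. exists k. split; assumption.
  - destruct (bin_digit beta k), (bin_digit beta 0); simpl; congruence.
Qed.
End BinaryDigits.

Lemma dyadic_odd_form (beta : R) : 0 < beta < 1 -> dyadic beta ->
  exists (al M : nat), (M < 2 ^ al)%nat /\ beta * 2 ^ (al + 1) = INR (2 * M + 1).
Proof.
  intros Hb [e [X HX]]. revert X HX. induction e as [|e IH]; intros X HX.
  - simpl in HX. exfalso. assert (IZR 0 < IZR X < IZR 1) as [H1 H2] by lra.
    apply lt_IZR in H1. apply lt_IZR in H2. lia.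
  - pose proof (pow_lt 2 e ltac:(lra)).
    assert (HX0 : (0 < X)%Z) by (apply lt_IZR; rewrite <- HX; simpl; nra).
    destruct (Z.Even_or_Odd X) as [[Y HY]|[Y HY]].
    + apply (IH Y). apply (Rmult_eq_reg_l 2); [|lra]. rewrite HY in HX.
      rewrite mult_IZR in HX. simpl in HX. simpl. lra.
    + exists e, (Z.to_nat Y).
      assert (EY : INR (Z.to_nat Y) = IZR Y) by (rewrite INR_IZR_INZ, Z2Nat.id by lia; reflexivity).
      rewrite HY, plus_IZR, mult_IZR in HX. simpl pow in HX. split.
      * apply INR_lt. rewrite EY, INR_pow2. simpl in HX. nra.
      * rewrite Nat.add_1_r, plus_INR, mult_INR, EY. simpl pow. simpl in HX |- *. lra.
Qed.

(** * The dyadic arcs that avoid b *)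

Definition address (q : nat) (w : R) : nat := Z.to_nat (Int_part (frac_part w * 2 ^ q)).

Lemma address_spec (q : nat) (w : R) : (address q w < 2 ^ q)%nat /\
  INR (address q w) <= frac_part w * 2 ^ q < INR (address q w) + 1.
Proof.
  pose proof (base_fp w). pose proof (pow_lt 2 q ltac:(lra)).
  destruct (base_Int_part (frac_part w * 2 ^ q)) as [H1 H2].
  unfold address. set (y := Int_part (frac_part w * 2 ^ q)) in *.
  assert (Hy : (0 <= y)%Z) by (assert (Hy : IZR (-1) < IZR y) by nra; apply lt_IZR in Hy; lia).
  assert (E : INR (Z.to_nat y) = IZR y) by (rewrite INR_IZR_INZ, Z2Nat.id; auto).
  rewrite E. split; [|lra].
  apply INR_lt. rewrite E, INR_pow2. nra.
Qed.

Definition admits_markov_subsystem (b delta : R) : Prop :=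
  exists (m : nat) (J : nat -> arc),
    markov_subsystem b m J /\ irreducible m J /\ aperiodic m J /\
    (forall x, (forall n : nat, distT (dbl_iter n x) b >= delta) -> max_invariant m J x) /\
    ~ max_invariant m J b.

Lemma pow2_ge4 (q : nat) : (2 <= q)%nat -> (4 <= 2 ^ q)%nat.
Proof.
  intros Hq. replace q with (2 + (q - 2))%nat by lia. rewrite Nat.pow_add_r.
  pose proof (Nat.pow_nonzero 2 (q - 2)). simpl. lia.
Qed.

Section DyadicFrame.
Variables (q : nat) (b : R).
Hypothesis Hq : (2 <= q)%nat.

Let n := (2 ^ q)%nat.
Let x := address q b.
Let th := frac_part b * 2 ^ q - INR x.
Let n_ge4 : (4 <= n)%nat := pow2_ge4 q Hq.
Let INR_n : INR n = 2 ^ q := INR_pow2 q.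

Lemma b_position_spec : (x < n)%nat /\ 0 <= th < 1.
Proof. destruct (address_spec q b) as [H1 H2]. split; [exact H1|]. unfold th, x. lra. Qed.

(* The kept arcs are those with addresses x+1, ..., x+m modulo 2^q, x being the address of b;
   [offset] inverts this enumeration. *)
Definition offset (w : nat) : nat := if S x <=? w then w - S x else w + n - S x.

Lemma offset_spec (w : nat) : (w < n)%nat -> (offset w < n)%nat /\
  exists t : Z, (t = 0 \/ t = 1)%Z /\ Z.of_nat (S x + offset w) = (Z.of_nat w + Z.of_nat n * t)%Z.
Proof.
  intros Hw. pose proof b_position_spec as [Hx _]. unfold offset.
  destruct (Nat.leb_spec (S x) w); split; try lia.
  - exists 0%Z. lia.
  - exists 1%Z. lia.
Qed.

Definition kept_arc (j : nat) : arc := grid_arc n (Z.of_nat (S x + j)).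

Lemma covers_of_window_step (s : nat -> bool) (i : nat) :
  (window q s i < n)%nat -> (window q s (S i) < n)%nat ->
  covers kept_arc (offset (window q s i)) (offset (window q s (S i))).
Proof.
  intros Hw Hw'. assert (Hn : (3 <= n)%nat) by (pose proof n_ge4; lia).
  destruct (offset_spec _ Hw) as [_ [t [_ Eo]]]. destruct (offset_spec _ Hw') as [_ [t' [_ Eo']]].
  pose proof (window_succ q s i) as Hs. fold n in Hs.
  pose proof (Nat.b2n_le_1 (s (i + q)%nat)). pose proof (Nat.b2n_le_1 (s i)).
  unfold covers, kept_arc.
  refine (grid_arc_dbl_onto n Hn _ _ (Z.of_nat (Nat.b2n (s (i + q)%nat)))
           (t' - 2 * t - Z.of_nat (Nat.b2n (s i))) _ _); [lia|].
  rewrite Eo, Eo'. apply (f_equal Z.of_nat) in Hs. lia.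
Qed.

(* When b is a grid point, the arc ending at b is discarded along with the one starting at b. *)
Definition kept_count : nat :=
  if Req_EM_T (frac_part b * 2 ^ q) (INR x) then (n - 2)%nat else (n - 1)%nat.

Let m := kept_count.

Lemma kept_count_cases : ((m = n - 1)%nat /\ 0 < th) \/ ((m = n - 2)%nat /\ th = 0).
Proof.
  pose proof b_position_spec as [_ Hth]. unfold m, kept_count, th in *.
  destruct (Req_EM_T (frac_part b * 2 ^ q) (INR x)); [right|left]; split; lra || reflexivity.
Qed.

Definition allowed (w : nat) : Prop := (w < n /\ offset w < m)%nat.

Lemma kept_count_le : (m <= n - 1)%nat.
Proof. destruct kept_count_cases as [[Em _]|[Em _]]; rewrite Em; lia. Qed.

Lemma allowed_of_ne (w : nat) : (w < n)%nat -> w <> x ->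
  (th = 0 -> S w <> x /\ S w <> (x + n)%nat) -> allowed w.
Proof.
  intros Hw Hx Hp. pose proof b_position_spec as [Hxn _].
  unfold allowed, offset. destruct kept_count_cases as [[Em _]|[Em Hz]]; [|specialize (Hp Hz)];
    rewrite Em; destruct (Nat.leb_spec (S x) w); lia.
Qed.

Lemma b_not_in_kept_arc (j : nat) : (j < m)%nat -> ~ in_arc (kept_arc j) b.
Proof.
  intros Hj. pose proof n_ge4. pose proof b_position_spec as [_ Hth].
  unfold kept_arc. rewrite in_grid_arc_iff by lia. intros [k Hk].
  set (t := (Int_part b - k)%Z).
  assert (Ht : INR n * IZR t + INR x + th = INR n * b - INR n * IZR k).
  { unfold t, th. rewrite minus_IZR, INR_n.
    pose proof (Rplus_Int_part_frac_part b) as Eb.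
    set (I := Int_part b) in *. set (f := frac_part b) in *. rewrite Eb. ring. }
  rewrite Nat2Z.inj_add, plus_IZR, <- !INR_IZR_INZ, S_INR in Hk.
  assert (Hjm : INR j + 2 - th < INR n).
  { destruct kept_count_cases as [[Em Hpos]|[Em Hz]]; rewrite Em in Hj; [|rewrite Hz].
    - assert (INR (j + 2) <= INR n) by (apply le_INR; lia). rewrite plus_INR in *. simpl in *. lra.
    - assert (INR (j + 3) <= INR n) by (apply le_INR; lia).
      rewrite plus_INR in *. simpl in *. lra. }
  pose proof (pos_INR j).
  assert (Ht0 : 0 < IZR t) by nra.
  assert (Ht1 : 1 <= IZR t) by (apply IZR_le; apply lt_IZR in Ht0; lia).
  nra.
Qed.

Lemma kept_arcs_markov : markov_subsystem b m kept_arc.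
Proof.
  assert (Hn : (3 <= n)%nat) by (pose proof n_ge4; lia).
  split; [|split; [|split]].
  - intros j Hj. split; [exact (grid_len n Hn)|exact (b_not_in_kept_arc j Hj)].
  - intros j k Hj Hk Hjk y [H1 H2].
    destruct (grid_arc_int_same n Hn _ _ y H1 H2) as [M HM].
    pose proof kept_count_le.
    assert (E : (Z.of_nat k - Z.of_nat j = Z.of_nat n * M)%Z) by lia.
    assert (B : (0 <= Z.of_nat j < Z.of_nat n /\ 0 <= Z.of_nat k < Z.of_nat n)%Z) by lia.
    clear - Hjk E B. set (nz := Z.of_nat n) in *. clearbody nz.
    destruct (Z.lt_total M 0) as [HM0|[HM0|HM0]]; nia.
  - intros j Hj y z Hy Hz. exact (grid_arc_dbl_inj n Hn _ y z Hy Hz).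
  - intros j k Hj Hk.
    destruct (classic (exists y, in_arc_int (kept_arc j) y /\ in_arc_int (kept_arc k) (dbl y)))
      as [[y [H1 H2]]|H]; [right|left; exact H].
    destruct (grid_arc_int_dbl n Hn _ _ y H1 H2) as [e [M [He HM]]].
    exact (grid_arc_dbl_onto n Hn _ _ e M He HM).
Qed.

Lemma dist_b_le_of_not_allowed (w : R) : ~ allowed (address q w) -> distT w b <= / 2 ^ q.
Proof.
  intros Hna. destruct (address_spec q w) as [Hy Hyw]. set (y := address q w) in *.
  destruct (offset_spec y Hy) as [Ho [t [Ht Eo]]].
  pose proof b_position_spec as [_ Hth].
  assert (Hgap : (offset y + 1 = n)%nat \/ ((offset y + 2 = n)%nat /\ th = 0)).
  { unfold allowed in Hna. destruct kept_count_cases as [[Em _]|[Em Hz]]; rewrite Em in Hna;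
      [left; lia|].
    destruct (Nat.eq_dec (offset y + 1) n); [left; exact e|right; split; [lia|exact Hz]]. }
  apply (f_equal IZR) in Eo.
  rewrite plus_IZR, mult_IZR, <- !INR_IZR_INZ, plus_INR, S_INR, INR_n in Eo.
  apply (distT_le_scaled w b q (1 - t)). rewrite minus_IZR.
  unfold th, x in *. apply Rabs_le.
  destruct Hgap as [Hg|[Hg Hz]]; apply (f_equal INR) in Hg;
    rewrite plus_INR, INR_n in Hg; simpl in Hg; split; lra.
Qed.

Lemma in_union_of_allowed (w : R) : allowed (address q w) -> in_union m kept_arc w.
Proof.
  intros [Hy Hj]. destruct (address_spec q w) as [_ Hyw]. set (y := address q w) in *.
  destruct (offset_spec y Hy) as [_ [t [_ Eo]]].
  exists (offset y). split; [exact Hj|].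
  unfold kept_arc. rewrite in_grid_arc_iff by (pose proof n_ge4; lia).
  exists (Int_part w - t)%Z. rewrite Eo, plus_IZR, mult_IZR, minus_IZR, <- !INR_IZR_INZ, INR_n.
  pose proof (Rplus_Int_part_frac_part w). split; nra.
Qed.

Definition kept_address (j : nat) : nat := if S x + j <? n then S x + j else S x + j - n.

Lemma kept_address_spec (j : nat) : (j < m)%nat ->
  allowed (kept_address j) /\ offset (kept_address j) = j.
Proof.
  intros Hj. pose proof b_position_spec as [Hx _].
  pose proof kept_count_le.
  unfold allowed, kept_address, offset.
  destruct (Nat.ltb_spec (S x + j) n);
    [destruct (Nat.leb_spec (S x) (S x + j))|destruct (Nat.leb_spec (S x) (S x + j - n))]; lia.
Qed.

Lemma kept_trans_path (N : nat) :
  (forall u v, allowed u -> allowed v -> exists s, window q s 0 = u /\ window q s N = v /\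
     forall i, (0 < i < N)%nat -> allowed (window q s i)) ->
  forall j k, (j < m)%nat -> (k < m)%nat -> trans_path m kept_arc N j k.
Proof.
  intros G j k Hj Hk.
  destruct (kept_address_spec j Hj) as [Vj Ej]. destruct (kept_address_spec k Hk) as [Vk Ek].
  destruct (G _ _ Vj Vk) as [s [S0 [SN SA]]].
  assert (HA : forall i, (i <= N)%nat -> allowed (window q s i)).
  { intros i Hi. destruct (Nat.eq_dec i 0) as [->|]; [rewrite S0; exact Vj|].
    destruct (Nat.eq_dec i N) as [->|]; [rewrite SN; exact Vk|]. apply SA. lia. }
  exists (fun i => offset (window q s i)). repeat split.
  - rewrite S0. exact Ej.
  - rewrite SN. exact Ek.
  - intros i Hi. apply HA, Hi.
  - intros i Hi. apply covers_of_window_step; apply HA; lia.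
Qed.

Theorem admits_markov_subsystem_of_paths (delta : R) (N : nat) :
  / 2 ^ q < delta -> (1 <= N)%nat ->
  (forall u v, allowed u -> allowed v -> exists s, window q s 0 = u /\ window q s N = v /\
     forall i, (0 < i < N)%nat -> allowed (window q s i)) ->
  admits_markov_subsystem b delta.
Proof.
  intros Hd HN G. pose proof (kept_trans_path N G) as P.
  exists m, kept_arc. split; [exact kept_arcs_markov|]. split; [|split; [|split]].
  - intros j k Hj Hk. exists N. exact (P j k Hj Hk).
  - split; [intros j k Hj Hk; exists N; exact (P j k Hj Hk)|].
    exists N. split; [exact HN|exact P].
  - intros y Hy k. destruct (classic (allowed (address q (dbl_iter k y)))) as [H|H].
    + exact (in_union_of_allowed _ H).
    + pose proof (dist_b_le_of_not_allowed _ H). specialize (Hy k). lra.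
  - intros H. destruct (H 0%nat) as [j [Hj Hb]]. exact (b_not_in_kept_arc j Hj Hb).
Qed.
End DyadicFrame.

(** * The three positions of b *)

Lemma admits_of_frac_eq0 (b delta : R) : 0 < delta -> frac_part b = 0 ->
  admits_markov_subsystem b delta.
Proof.
  intros Hd Hb0. destruct (pow2_inv_small delta Hd) as [k0 Hk0].
  set (q := (k0 + 3)%nat). assert (Hq : (2 <= q)%nat) by lia.
  assert (Hx : address q b = 0%nat).
  { unfold address. rewrite Hb0, Rmult_0_l. change 0 with (INR 0).
    rewrite Int_part_INR. reflexivity. }
  apply (admits_markov_subsystem_of_paths q b Hq delta (q + q)); [apply Hk0; lia|lia|].
  intros u v [Hu _] [Hv _].
  destruct (connect_avoiding_constants q ltac:(lia) u v Hu Hv) as [s [E0 [EN W]]].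
  exists s. split; [exact E0|]. split; [exact EN|]. intros i Hi.
  assert (Hc : forall c : bool, window q s i <> if c then (2 ^ q - 1)%nat else 0%nat).
  { intros c. rewrite <- (window_const q c (fun _ => c) 0) by reflexivity.
    apply window_neq_of_differs, W, Hi. }
  pose proof (window_lt q s i). pose proof (Hc true). pose proof (Hc false).
  apply (allowed_of_ne q b Hq); rewrite ?Hx; [assumption|assumption|]. intros _. simpl in *. lia.
Qed.

Lemma admits_of_not_dyadic (b delta : R) : 0 < delta -> ~ dyadic (frac_part b) ->
  admits_markov_subsystem b delta.
Proof.
  intros Hd Hnd. set (beta := frac_part b) in *.
  assert (Hb : 0 <= beta < 1) by (pose proof (base_fp b); unfold beta; lra).
  destruct (pow2_inv_small delta Hd) as [k0 Hk0].
  destruct (bin_digit_recurs beta Hnd (S k0)) as [k [Hk Hdig]].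
  set (q := S k). assert (Hq : (2 <= q)%nat) by lia.
  assert (Hx : address q b = window q (bin_digit beta) 0)
    by (rewrite window_bin_digit by exact Hb; reflexivity).
  assert (Hth : beta * 2 ^ q - INR (address q b) <> 0).
  { intros E. apply Hnd. exists q, (dyadic_floor beta q).
    rewrite Hx, window_bin_digit, INR_IZR_INZ, Z2Nat.id in E
      by (exact Hb || apply dyadic_floor_nonneg, Hb).
    lra. }
  apply (admits_markov_subsystem_of_paths q b Hq delta (q + q)); [apply Hk0; lia|lia|].
  intros u v [Hu _] [Hv _].
  destruct (connect_avoiding_word q (bin_digit beta 0) (bin_digit beta) ltac:(lia) eq_refl
              ltac:(replace (q - 1)%nat with k by lia; exact Hdig) u v Hu Hv) as [s [E0 [EN W]]].
  exists s. split; [exact E0|]. split; [exact EN|]. intros i Hi.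
  apply (allowed_of_ne q b Hq); [apply window_lt| |intros E; contradiction].
  rewrite Hx. apply window_neq_of_differs, W, Hi.
Qed.

Lemma admits_of_dyadic (b delta : R) : 0 < delta -> frac_part b <> 0 -> frac_part b <> 1 / 2 ->
  dyadic (frac_part b) -> admits_markov_subsystem b delta.
Proof.
  intros Hd H0 H12 Hdy. set (beta := frac_part b) in *.
  assert (Hb : 0 < beta < 1) by (pose proof (base_fp b); unfold beta in *; lra).
  destruct (dyadic_odd_form beta Hb Hdy) as [al [M [HM Hbeta]]].
  assert (Hal : (1 <= al)%nat).
  { destruct al; [|lia]. exfalso. apply H12. assert (M = 0%nat) by (simpl in HM; lia). subst M.
    simpl in Hbeta. lra. }
  destruct (pow2_inv_small delta Hd) as [k0 Hk0].
  set (J := (k0 + 4)%nat). set (q := (al + 1 + J)%nat). assert (Hq : (2 <= q)%nat) by lia.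
  set (x := ((2 * M + 1) * 2 ^ J)%nat).
  assert (Hbx : beta * 2 ^ q = INR x).
  { unfold x, q. rewrite mult_INR, INR_pow2, !pow_add, <- Hbeta, pow_add. ring. }
  assert (Hx : address q b = x).
  { unfold address. fold beta. rewrite Hbx, Int_part_INR. apply Nat2Z.id. }
  apply (admits_markov_subsystem_of_paths q b Hq delta (q + (q + q + q))); [apply Hk0; lia|lia|].
  intros u v [Hu _] [Hv _].
  destruct (connect_avoiding_dyadic_pair al J (bits al M) Hal ltac:(lia) u v Hu Hv)
    as [s [E0 [EN W]]].
  exists s. split; [exact E0|]. split; [exact EN|]. intros i Hi.
  assert (Hc : forall c : bool, window q s i <> if c then x else (x - 1)%nat).
  { intros c. unfold x. rewrite <- (window_dyadic_word al J M c HM).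
    apply window_neq_of_differs, W, Hi. }
  pose proof (window_lt q s i). pose proof (Hc true). pose proof (Hc false).
  assert (1 <= x)%nat by (unfold x; pose proof (Nat.pow_nonzero 2 J); nia).
  apply (allowed_of_ne q b Hq); rewrite ?Hx; [assumption|assumption|]. intros _. simpl in *. lia.
Qed.

Theorem proposition6p2 (c : R) (hc : 0 < c < 1) (delta : R) (hdelta : 0 < delta) :
  exists (m : nat) (J : nat -> arc),
    markov_subsystem (1/2 - c) m J /\ irreducible m J /\ aperiodic m J /\
    (forall x, (forall n : nat, distT (dbl_iter n x) (1/2 - c) >= delta) ->
       max_invariant m J x) /\
    ~ max_invariant m J (1/2 - c).
Proof.
  change (admits_markov_subsystem (1/2 - c) delta).
  assert (H12 : frac_part (1/2 - c) <> 1/2).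
  { intros H. pose proof (Rplus_Int_part_frac_part (1/2 - c)) as E. rewrite H in E.
    assert (IZR (-1) < IZR (Int_part (1/2 - c)) < IZR 0) as [H1 H2] by (simpl; lra).
    apply lt_IZR in H1. apply lt_IZR in H2. lia. }
  destruct (Req_dec (frac_part (1/2 - c)) 0) as [H0|H0].
  - exact (admits_of_frac_eq0 _ _ hdelta H0).
  - destruct (classic (dyadic (frac_part (1/2 - c)))) as [Hdy|Hdy].
    + exact (admits_of_dyadic _ _ hdelta H0 H12 Hdy).
    + exact (admits_of_not_dyadic _ _ hdelta Hdy).
Qed.
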